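(* Fix an integer $q\ge 2$. There exist constants $c>0$ and $n_0$ depending only on $q$ such that for all $n \ge n_0$, all positive integers $t \le 10\sqrt{n}$, and all $S \subseteq [q]^n$ with $|S| \ge n^4 H_q(n,t)$, we have \[ \Delta(G[S]) \ge c\,\frac{n^{3/2}}{H_q(n,t)}\,|S|. \]
   Context: $d(x,y)$ is the Hamming distance on $[q]^n$ (number of differing coordinates). $V_q(n,r) = \sum_{i=0}^{r}\binom{n}{i}(q-1)^i$ and $H_q(n,t) = q^n / V_q(n,t)$. $G = G_{q,n,t}$ is the graph with vertex set $[q]^n$ in which two distinct vertices are adjacent iff their Hamming distance is at most $2t$; $G[S]$ is its induced subgraph on $S$, and $\Delta(\cdot)$ denotes maximum degree. *)

From mathcomp Require Import all_boot all_order all_algebra.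
From mathcomp Require Import reals.
Set Implicit Arguments. Unset Strict Implicit. Unset Printing Implicit Defensive.
Import Order.TTheory GRing.Theory Num.Theory.

Definition word (q n : nat) := {ffun 'I_n -> 'I_q}.

Definition hamming (q n : nat) (x y : word q n) : nat :=
  #|[set i : 'I_n | x i != y i]|.

Definition Vq (q n r : nat) : nat :=
  \sum_(0 <= i < r.+1) 'C(n, i) * (q - 1) ^ i.

Definition Hq (R : realType) (q n t : nat) : R :=
  (q ^ n)%:R / (Vq q n t)%:R.

Definition Gadj (q n t : nat) (x y : word q n) : bool :=
  (x != y) && (hamming x y <= 2 * t).

Definition deg_in (q n t : nat) (S : {set word q n}) (v : word q n) : nat :=
  #|[set u in S | Gadj t v u]|.

(* Maximum degree of G[S] (0 if S is empty). *)
Definition maxdeg (q n t : nat) (S : {set word q n}) : nat :=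
  \max_(v in S) deg_in t S v.

(* Let f z = |B(z,t) ∩ S|.  Double counting gives sum_z f z = |S| V_q(n,t) and
   sum_z (f z)^2 = sum_{x,y in S} |B(x,t) ∩ B(y,t)|, so by Cauchy-Schwarz
   (|S| V_q(n,t))^2 <= q^n sum_{x,y in S} |B(x,t) ∩ B(y,t)|.  Two balls whose centres are at
   distance d share at most q^d V_q(n,t-ceil(d/2)) <= (2tq^2/n)^ceil(d/2) V_q(n,t) points, and
   none when d > 2t.  Pairs with d <= 4 are too few to matter once |S| >= n^4 H_q(n,t); every
   pair with d >= 5 is an edge of G[S] and contributes at most (2tq^2/n)^3 V_q(n,t).  Hence
   n^3 |S| V_q(n,t) <= 2 q^n Delta(G[S]) (2tq^2)^3, and t <= 10 sqrt n gives the bound. *)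

From mathcomp Require Import all_boot all_order all_algebra.
From mathcomp Require Import reals.
From mathcomp Require Import zify ring lra.
Set Implicit Arguments. Unset Strict Implicit.

Lemma card_word_forall q n (P : 'I_n -> 'I_q -> bool) :
  #|[set z : word q n | [forall i, P i (z i)]]| = \prod_(i < n) #|[pred c | P i c]|.
Proof.
have -> : #|[set z : word q n | [forall i, P i (z i)]]| = #|family (fun i => [pred c | P i c])|.
  by apply: eq_card => z; rewrite inE; apply/forallP/familyP.
by rewrite card_family foldrE big_map big_enum.
Qed.

Lemma card_sum_mem (T : finType) (A : {set T}) : #|A| = \sum_z (z \in A).
Proof. by rewrite -sum1_card big_mkcond /=; apply: eq_bigr => z _; case: (z \in A). Qed.

Lemma bin_leq_exp m i : 'C(m, i) <= m ^ i.
Proof.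
elim: i => [|i IH]; first by rewrite bin0.
apply: leq_trans (_ : i.+1 * 'C(m, i.+1) <= _); first by rewrite leq_pmull.
by rewrite mul_bin_left expnS leq_mul // leq_subr.
Qed.

Lemma sqr_sum_leq (I : finType) (a : I -> nat) :
  (\sum_i a i) ^ 2 <= #|I| * \sum_i a i ^ 2.
Proof.
suff : 2 * (\sum_i a i) ^ 2 <= 2 * (#|I| * \sum_i a i ^ 2) by rewrite leq_pmul2l.
have -> : (\sum_i a i) ^ 2 = \sum_i \sum_j a i * a j.
  by rewrite -mulnn big_distrl /=; apply: eq_bigr => i _; rewrite big_distrr.
rewrite big_distrr /=.
apply: leq_trans (_ : \sum_i \sum_(j : I) (a i ^ 2 + a j ^ 2) <= _).
  apply: leq_sum => i _; rewrite big_distrr /=; apply: leq_sum => j _.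
  by have /leqifP := nat_AGM2 (a i) (a j); case: ifP => _; nia.
rewrite (eq_bigr (fun i => #|I| * a i ^ 2 + \sum_j a j ^ 2)); last first.
  by move=> i _; rewrite big_split /= sum_nat_const.
by rewrite big_split /= sum_nat_const -big_distrr /= cardT -cardE; lia.
Qed.

Section Hamming.
Variables q n : nat.
Implicit Types (x y z : word q n).

Definition diffset x y := [set i : 'I_n | x i != y i].
Definition ball x r := [set z : word q n | hamming x z <= r].

Lemma hammingE x y : hamming x y = #|diffset x y|. Proof. by []. Qed.

Lemma diffsetC x y : diffset x y = diffset y x.
Proof. by apply/setP => i; rewrite !inE eq_sym. Qed.

Lemma hammingC x y : hamming x y = hamming y x.
Proof. by rewrite !hammingE diffsetC. Qed.

Lemma hamming_xx x : hamming x x = 0.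
Proof. by apply/eqP; rewrite cards_eq0; apply/eqP/setP => i; rewrite !inE eqxx. Qed.

Lemma hamming_triangle x y z : hamming x y <= hamming x z + hamming z y.
Proof.
apply: leq_trans (_ : #|diffset x z :|: diffset z y| <= _); last first.
  by rewrite cardsU leq_subr.
apply: subset_leq_card; apply/subsetP => i; rewrite !inE.
by case: (x i =P z i) => [->|]; rewrite ?orbT.
Qed.

Lemma mem_ballC x y r : (y \in ball x r) = (x \in ball y r).
Proof. by rewrite !inE hammingC. Qed.

Lemma card_neq (a : 'I_q) : #|[pred c | a != c]| = q - 1.
Proof.
have := cardC1 a; rewrite card_ord subn1 => <-.
by apply: eq_card => c; rewrite !inE eq_sym.
Qed.

Lemma card_diffset_eq x (A : {set 'I_n}) : #|[set z | diffset x z == A]| = (q - 1) ^ #|A|.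
Proof.
have -> : [set z | diffset x z == A] =
          [set z : word q n | [forall i, (x i != z i) == (i \in A)]].
  apply/setP => z; rewrite !inE; apply/eqP/forallP => [<- i|H]; first by rewrite inE.
  by apply/setP => i; rewrite inE; exact: (eqP (H i)).
rewrite (card_word_forall (fun i c => (x i != c) == (i \in A))).
rewrite -prod_nat_const [RHS]big_mkcond /=.
apply: eq_bigr => i _; case: (i \in A).
  by rewrite -(card_neq (x i)); apply: eq_card => c; rewrite !inE eqb_id.
rewrite -(card1 (x i)); apply: eq_card => c; rewrite !inE.
by case: (x i =P c) => [->|/eqP]; rewrite ?eqxx // eq_sym => /negbTE ->.
Qed.

Lemma card_diffset_sub x (D : {set 'I_n}) :
  #|[set z | diffset x z \subset D]| <= q ^ #|D|.
Proof.
have -> : [set z | diffset x z \subset D] =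
          [set z : word q n | [forall i, (x i != z i) ==> (i \in D)]].
  apply/setP => z; rewrite !inE; apply/subsetP/forallP => H i.
    by apply/implyP => hi; apply: H; rewrite inE.
  by rewrite inE => hi; exact: (implyP (H i) hi).
rewrite (card_word_forall (fun i c => (x i != c) ==> (i \in D))).
rewrite -prod_nat_const [X in _ <= X]big_mkcond /=.
apply: leq_prod => i _; case: (i \in D).
  by apply: leq_trans (max_card _) _; rewrite card_ord.
rewrite -(card1 (x i)); apply: subset_leq_card; apply/subsetP => c.
by rewrite !inE implybF negbK eq_sym.
Qed.

Lemma card_sphere x k : #|[set z | hamming x z == k]| = 'C(n, k) * (q - 1) ^ k.
Proof.
rewrite -sum1_card (partition_big (diffset x) (fun A => #|A| == k)) /=;
  last by move=> z; rewrite inE.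
rewrite -[in RHS](card_ord n) -card_draws -sum_nat_const.
apply: eq_big => [A|A /eqP <-]; first by rewrite inE.
rewrite -(card_diffset_eq x) -sum1_card; apply: eq_bigl => z; rewrite !inE hammingE.
by case: (diffset x z =P A) => [->|_]; rewrite ?eqxx ?andbF.
Qed.

Lemma card_ball x r : #|ball x r| = Vq q n r.
Proof.
elim: r => [|r IH].
  by rewrite /Vq big_nat1 -(card_sphere x); apply: eq_card => z; rewrite !inE leqn0.
have -> : ball x r.+1 = ball x r :|: [set z | hamming x z == r.+1].
  by apply/setP => z; rewrite !inE leq_eqVlt ltnS orbC.
rewrite cardsU IH card_sphere /Vq [RHS]big_nat_recr //=.
have -> : ball x r :&: [set z | hamming x z == r.+1] = set0.
  by apply/setP => z; rewrite !inE; case: eqP => [->|]; rewrite ?ltnn ?andbF.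
by rewrite cards0 subn0.
Qed.

End Hamming.

Lemma Vq_gt0 q n t : 0 < Vq q n t.
Proof. by rewrite /Vq big_nat_recl // bin0 expn0 mul1n. Qed.

Lemma Vq_leq_pow q n k : 0 < n -> 0 < q -> Vq q n k <= k.+1 * (n * q) ^ k.
Proof.
move=> n_gt0 q_gt0; rewrite /Vq.
apply: leq_trans (_ : \sum_(0 <= i < k.+1) (n * q) ^ k <= _); last first.
  by rewrite sum_nat_const_nat subn0.
rewrite big_nat [X in _ <= X]big_nat; apply: leq_sum => i /andP[_ lt_ik].
apply: leq_trans (_ : (n * q) ^ i <= _); last by rewrite leq_pexp2l ?muln_gt0 ?n_gt0.
rewrite expnMn leq_mul ?bin_leq_exp //.
by case: i {lt_ik} => [|i]; rewrite ?expn0 // leq_exp2r // leq_subr.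
Qed.

(* Termwise, (n - i) C(n,i) = (i+1) C(n,i+1) and n <= 2 (n - i) for i < t <= n/2. *)
Lemma Vq_pred q n t s : 1 < q -> 2 * t <= n -> 0 < s <= t ->
  n * Vq q n s.-1 <= 2 * t * Vq q n s.
Proof.
move=> q_gt1 tn /andP[s_gt0 st]; rewrite /Vq prednK // big_nat_recl // mulnDr.
apply: leq_trans (leq_addl _ _); rewrite !big_distrr /=.
rewrite big_nat [X in _ <= X]big_nat; apply: leq_sum => i /andP[_ lt_is].
rewrite !mulnA; apply: leq_mul; last by rewrite leq_pexp2l //; lia.
apply: leq_trans (_ : 2 * ((n - i) * 'C(n, i)) <= _).
  by rewrite mulnA leq_mul //; lia.
by rewrite -mul_bin_left mulnA leq_mul //; lia.
Qed.

Lemma Vq_subn q n t j : 1 < q -> 2 * t <= n -> j <= t ->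
  n ^ j * Vq q n (t - j) <= (2 * t) ^ j * Vq q n t.
Proof.
move=> q_gt1 tn; elim: j => [|j IH] jt; first by rewrite subn0.
rewrite subnS !expnS -mulnA (mulnCA n).
apply: leq_trans (_ : n ^ j * (2 * t * Vq q n (t - j)) <= _).
  by rewrite leq_mul // Vq_pred //; lia.
by rewrite mulnCA -[X in _ <= X]mulnA leq_mul // IH //; lia.
Qed.

Section BallIntersection.
Variables q n t : nat.
Implicit Types x y z : word q n.

Lemma ballI_neq0_hamming x y : 0 < #|ball x t :&: ball y t| -> hamming x y <= 2 * t.
Proof.
case/card_gt0P => z; rewrite !inE (hammingC y) => /andP[xz zy].
by have := hamming_triangle x y z; lia.
Qed.

(* A point of both balls is determined by its coordinates inside and outside D = diffset x y;
   outside D it lies in a smaller ball around x, since it spends at least |D|/2 of its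
   budget of t differences inside D. *)
Lemma card_ballI x y :
  #|ball x t :&: ball y t| <= q ^ hamming x y * Vq q n (t - uphalf (hamming x y)).
Proof.
rewrite hammingE; set D := diffset x y; set A := ball x t :&: ball y t.
pose outD z : word q n := [ffun i => if i \in D then x i else z i].
pose inD z : word q n := [ffun i => if i \in D then z i else x i].
have inj_split : {in A &, injective (fun z => (outD z, inD z))}.
  move=> z1 z2 _ _ [e1 e2]; apply/ffunP => i.
  have := congr1 (fun f : word q n => f i) e1; have := congr1 (fun f : word q n => f i) e2.
  by rewrite !ffunE; case: (i \in D).
rewrite -(card_in_imset inj_split).
apply: leq_trans (_ : #|setX (ball x (t - uphalf #|D|)) [set w | diffset x w \subset D]|
                       <= _); last by rewrite cardsX card_ball mulnC leq_mul ?card_diffset_sub.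
apply: subset_leq_card; apply/subsetP => _ /imsetP[z zA ->].
move: zA; rewrite !inE !hammingE => /andP[xz yz]; apply/andP; split; last first.
  by apply/subsetP => i; rewrite !inE ffunE !inE; case: (x i =P y i) => _ /=; rewrite ?eqxx.
have -> : diffset x (outD z) = diffset x z :\: D.
  by apply/setP => i; rewrite !inE ffunE !inE; case: (x i =P y i); rewrite ?eqxx ?andbT ?andbF.
have eqDc : diffset y z :\: D = diffset x z :\: D.
  by apply/setP => i; rewrite !inE; case: (x i =P y i) => [->|].
have := cardsID D (diffset x z); have := cardsID D (diffset y z); rewrite eqDc.
have : #|D| <= #|diffset x z :&: D| + #|diffset y z :&: D|.
  apply: leq_trans (_ : #|(diffset x z :&: D) :|: (diffset y z :&: D)| <= _); last first.
    by rewrite cardsU leq_subr.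
  apply: subset_leq_card; apply/subsetP => i; rewrite !inE.
  case: (x i =P y i) => //= ne _; rewrite !andbT.
  by case: (x i =P z i) => //= e; rewrite -e; apply/eqP => e'; apply: ne.
move=> cover eqy eqx; suff : #|D| <= (t - #|diffset x z :\: D|).*2.
  by rewrite -leq_uphalf_double; lia.
lia.
Qed.

End BallIntersection.

Section DoubleCounting.
Variables (q n t : nat) (S : {set word q n}).

Lemma card_setIS (A : {set word q n}) : #|A :&: S| = \sum_(y in S) (y \in A).
Proof.
rewrite card_sum_mem [RHS]big_mkcond /=; apply: eq_bigr => y _; rewrite inE.
by case: (y \in S); rewrite ?andbT ?andbF.
Qed.

Lemma sum_card_ballIS : \sum_z #|ball z t :&: S| = #|S| * Vq q n t.
Proof.
rewrite (eq_bigr _ (fun z _ => card_setIS (ball z t))) exchange_big /=.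
rewrite -sum_nat_const; apply: eq_bigr => y _.
by rewrite -(card_ball y t) card_sum_mem; apply: eq_bigr => z _; rewrite mem_ballC.
Qed.

Lemma sum_sqr_card_ballIS : \sum_z #|ball z t :&: S| ^ 2 =
  \sum_(x in S) \sum_(y in S) #|ball x t :&: ball y t|.
Proof.
rewrite (eq_bigr (fun z => \sum_(x in S) \sum_(y in S) ((x \in ball z t) * (y \in ball z t))));
  last first.
  move=> z _; rewrite card_setIS -mulnn big_distrl /=; apply: eq_bigr => x _.
  by rewrite big_distrr.
rewrite exchange_big /=; apply: eq_bigr => x _.
rewrite exchange_big /=; apply: eq_bigr => y _.
rewrite card_sum_mem; apply: eq_bigr => z _.
by rewrite (mem_ballC z x) (mem_ballC z y) mulnb [in RHS]inE.
Qed.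

Lemma deg_inE x : deg_in t S x = \sum_(y in S) Gadj t x y.
Proof.
rewrite /deg_in card_sum_mem [RHS]big_mkcond /=; apply: eq_bigr => y _; rewrite inE.
by case: (y \in S).
Qed.

End DoubleCounting.

Lemma leq_mul_exp_lower a b c d i j : 0 < a -> b <= a -> i <= j ->
  a ^ j * c <= b ^ j * d -> a ^ i * c <= b ^ i * d.
Proof.
move=> a_gt0 ba ij; rewrite -(subnKC ij) !expnD -!mulnA => le_j.
rewrite -(@leq_pmul2l (a ^ (j - i))) ?expn_gt0 ?a_gt0 // mulnCA.
apply: leq_trans le_j _; rewrite mulnCA leq_mul2r; apply/orP; right.
by case: (j - i) => [|k] //; rewrite leq_exp2r.
Qed.

Section PairBound.
Variables q n t : nat.
Hypotheses (q_gt1 : 1 < q) (n_gt0 : 0 < n) (t_small : t * t <= 100 * n)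
  (r_le_n : 2 * t * q ^ 2 <= n).
Local Notation V := (Vq q n t).
Local Notation M x y := #|ball x t :&: ball y t|.
Local Notation r := (2 * t * q ^ 2).
Implicit Types x y : word q n.

Lemma card_ballI_decay x y : 0 < M x y ->
  n ^ uphalf (hamming x y) * M x y <= r ^ uphalf (hamming x y) * V.
Proof.
move=> M_gt0; have d_le := ballI_neq0_hamming M_gt0.
set d := hamming x y in d_le *; set j := uphalf d.
have jt : j <= t by rewrite /j leq_uphalf_double -mul2n.
have dj : d <= 2 * j by rewrite mul2n -leq_uphalf_double.
apply: leq_trans (_ : n ^ j * (q ^ d * Vq q n (t - j)) <= _).
  by rewrite leq_mul2l card_ballI orbT.
rewrite mulnCA; apply: leq_trans (_ : q ^ d * ((2 * t) ^ j * V) <= _).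
  rewrite leq_mul2l Vq_subn ?orbT //.
  by apply: leq_trans r_le_n; rewrite leq_pmulr ?expn_gt0; lia.
rewrite mulnA leq_mul2r [r ^ j]expnMn [q ^ d * _]mulnC leq_mul2l -expnM leq_pexp2l ?orbT //; lia.
Qed.

Lemma card_ballI_bound x y :
  n ^ 3 * M x y <=
  ((hamming x y <= 2) * n ^ 3 + (hamming x y <= 4) * (400 * n ^ 2 * q ^ 4)
   + Gadj t x y * r ^ 3) * V.
Proof.
have [->|M_gt0] := posnP (M x y); first by rewrite muln0.
have M_le : M x y <= V by rewrite -(card_ball x t) subset_leq_card ?subsetIl.
case: (leqP (hamming x y) 2) => [_|d_gt2].
  apply: leq_trans (_ : n ^ 3 * V <= _); first by rewrite leq_mul2l M_le orbT.
  by rewrite mul1n -addnA mulnDl leq_addr.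
have := card_ballI_decay M_gt0; case: (leqP (hamming x y) 4) => [d_le4|d_gt4].
  have -> : uphalf (hamming x y) = 2 by move: d_gt2 d_le4; case: hamming => [|[|[|[|[|]]]]].
  move=> decay; rewrite mul0n mul1n add0n mulnDl.
  apply: leq_trans (leq_addr _ _).
  apply: leq_trans (_ : n * (r ^ 2 * V) <= _).
    by rewrite expnS -mulnA leq_mul2l decay orbT.
  have -> : r ^ 2 = 4 * (t * t) * q ^ 4 by rewrite (expnM q 2 2); lia.
  by move: (t * t) (q ^ 4) V t_small => T Q W; nia.
have -> : Gadj t x y.
  by rewrite /Gadj ballI_neq0_hamming // andbT; apply: contraTneq d_gt4 => ->; rewrite hamming_xx.
have j3 : 3 <= uphalf (hamming x y) by rewrite geq_uphalf_double; lia.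
rewrite mul0n !mul1n !add0n.
exact: leq_mul_exp_lower n_gt0 r_le_n j3.
Qed.

End PairBound.

Section SumBound.
Variables (q n t : nat) (S : {set word q n}).

Lemma sum_hamming_leq x k : \sum_(y in S) (hamming x y <= k) <= Vq q n k.
Proof.
apply: leq_trans (_ : #|ball x k :&: S| <= _).
  by rewrite card_setIS; apply: eq_leq; apply: eq_bigr => y _; rewrite inE.
by rewrite -(card_ball x k) subset_leq_card ?subsetIl.
Qed.

Hypotheses (q_gt1 : 1 < q) (n_gt0 : 0 < n) (t_small : t * t <= 100 * n)
  (r_le_n : 2 * t * q ^ 2 <= n).

Lemma sum_card_ballI_bound x : x \in S ->
  n ^ 3 * \sum_(y in S) #|ball x t :&: ball y t| <=
  (Vq q n 2 * n ^ 3 + Vq q n 4 * (400 * n ^ 2 * q ^ 4) + maxdeg t S * (2 * t * q ^ 2) ^ 3)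
  * Vq q n t.
Proof.
move=> xS; rewrite big_distrr /=.
apply: leq_trans; first by apply: leq_sum => y _; exact: card_ballI_bound.
rewrite -big_distrl /= leq_mul2r; apply/orP; right.
rewrite !big_split /= -!big_distrl /= -deg_inE.
rewrite !leq_add ?leq_mul ?sum_hamming_leq //.
by rewrite /maxdeg (bigD1 x) //= leq_maxl.
Qed.

End SumBound.

Lemma Vq_small_radii_leq q n : 0 < n -> 0 < q ->
  Vq q n 2 * n ^ 3 + Vq q n 4 * (400 * n ^ 2 * q ^ 4) <= 2003 * n ^ 6 * q ^ 8.
Proof.
move=> n_gt0 q_gt0.
have V2 := Vq_leq_pow 2 n_gt0 q_gt0; have V4 := Vq_leq_pow 4 n_gt0 q_gt0.
apply: leq_trans (leq_add (leq_mul V2 (leqnn _)) (leq_mul V4 (leqnn _))) _.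
have n56 : n ^ 5 <= n ^ 6 by rewrite leq_pexp2l.
have q28 : q ^ 2 <= q ^ 8 by rewrite leq_pexp2l.
have -> : 3 * (n * q) ^ 2 * n ^ 3 = 3 * n ^ 5 * q ^ 2 by ring.
have -> : 5 * (n * q) ^ 4 * (400 * n ^ 2 * q ^ 4) = 2000 * n ^ 6 * q ^ 8 by ring.
nia.
Qed.

Lemma sum_card_ballI_leq q n t (S : {set word q n}) :
  1 < q -> 0 < n -> t * t <= 100 * n -> 2 * t * q ^ 2 <= n ->
  n ^ 3 * (#|S| * Vq q n t) ^ 2 <=
  q ^ n * (#|S| * Vq q n t * (2003 * n ^ 6 * q ^ 8 + maxdeg t S * (2 * t * q ^ 2) ^ 3)).
Proof.
move=> q_gt1 n_gt0 t_small r_le_n.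
have cs := sqr_sum_leq (fun z : word q n => #|ball z t :&: S|).
rewrite sum_card_ballIS sum_sqr_card_ballIS card_ffun !card_ord in cs.
apply: leq_trans (_ : n ^ 3 * (q ^ n * \sum_(x in S) \sum_(y in S) #|ball x t :&: ball y t|)
                      <= _); first by rewrite leq_mul2l cs orbT.
rewrite mulnCA leq_mul2l big_distrr -mulnA (mulnC (Vq q n t)) -sum_nat_const; apply/orP; right.
apply: leq_sum => x xS; apply: leq_trans (sum_card_ballI_bound q_gt1 n_gt0 t_small r_le_n xS) _.
by rewrite leq_mul2r leq_add2r Vq_small_radii_leq ?orbT //; lia.
Qed.

Lemma maxdeg_lower_nat q n t (S : {set word q n}) :
  1 < q -> 4006 * q ^ 8 <= n -> t * t <= 100 * n -> n ^ 4 * q ^ n <= #|S| * Vq q n t ->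
  n ^ 3 * (#|S| * Vq q n t) <= 2 * q ^ n * maxdeg t S * (2 * t * q ^ 2) ^ 3.
Proof.
move=> q_gt1 n_large t_small S_large.
have q8_gt0 : 0 < q ^ 8 by rewrite expn_gt0; lia.
have n_gt0 : 0 < n by lia.
have r_le_n : 2 * t * q ^ 2 <= n.
  rewrite -leq_sqr (_ : (2 * t * q ^ 2) ^ 2 = 4 * (t * t) * q ^ 4); last by ring.
  have : q ^ 4 <= q ^ 8 by rewrite leq_pexp2l //; lia.
  by move: (t * t) (q ^ 4) (q ^ 8) t_small n_large => T Q4 Q8; nia.
have X_gt0 : 0 < #|S| * Vq q n t.
  by apply: leq_trans S_large; rewrite muln_gt0 !expn_gt0 n_gt0; lia.
set X := #|S| * Vq q n t in S_large X_gt0 *; set K := 2003 * n ^ 6 * q ^ 8.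
have le_X : n ^ 3 * X <= q ^ n * (K + maxdeg t S * (2 * t * q ^ 2) ^ 3).
  rewrite -(leq_pmul2l X_gt0) [X * (q ^ n * _)]mulnCA.
  rewrite (_ : X * (n ^ 3 * X) = n ^ 3 * X ^ 2); last by ring.
  exact: sum_card_ballI_leq.
have le_K : 2 * q ^ n * K <= n ^ 3 * X.
  apply: leq_trans (_ : n ^ 3 * (n ^ 4 * q ^ n) <= _); last by rewrite leq_mul2l S_large orbT.
  rewrite /K (_ : n ^ 3 * (n ^ 4 * q ^ n) = n ^ 6 * n * q ^ n); last by ring.
  by move: (n ^ 6) (q ^ 8) (q ^ n) n_large => a b c; nia.
by move: le_X le_K; rewrite mulnDr !mulnA; lia.
Qed.

Import Order.TTheory GRing.Theory Num.Theory.
Local Open Scope ring_scope.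

Section RealBounds.
Variable R : realType.

Lemma nat_sqr_leq_of_le_sqrt (n t : nat) :
  t%:R <= 10 * Num.sqrt (n%:R : R) -> (t * t <= 100 * n)%N.
Proof.
move=> le_t; rewrite -(ler_nat R) !natrM.
apply: le_trans (_ : (10 * Num.sqrt (n%:R : R)) ^+ 2 <= _).
  by rewrite -expr2 lerXn2r ?nnegrE ?ler0n //; apply: le_trans le_t.
by rewrite exprMn sqr_sqrtr ?ler0n // -natrX.
Qed.

Lemma card_ge_Hq (q n t s : nat) :
  n%:R ^+ 4 * Hq R q n t <= s%:R -> (n ^ 4 * q ^ n <= s * Vq q n t)%N.
Proof.
by rewrite /Hq mulrA ler_pdivrMr ?ltr0n ?Vq_gt0 // -!natrX -!natrM ler_nat.
Qed.

Lemma maxdeg_lower_real (q n t D s : nat) : (0 < q)%N -> (0 < n)%N ->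
  t%:R <= 10 * Num.sqrt (n%:R : R) ->
  (n ^ 3 * (s * Vq q n t) <= 2 * q ^ n * D * (2 * t * q ^ 2) ^ 3)%N ->
  (16000 * ((q ^ 2)%:R : R) ^+ 3)^-1 * (n%:R * Num.sqrt (n%:R : R)) / Hq R q n t * s%:R
    <= D%:R.
Proof.
move=> q_gt0 n_gt0 le_t; rewrite -(ler_nat R) /Hq !(natrX, natrM).
have u_gt0 : 0 < Num.sqrt (n%:R : R) by rewrite sqrtr_gt0 ltr0n.
have nE : n%:R = Num.sqrt (n%:R : R) ^+ 2 by rewrite sqr_sqrtr ?ler0n.
set u := Num.sqrt _ in u_gt0 le_t nE *; rewrite nE.
set Q := (q%:R : R) ^+ 2; set N := (q%:R : R) ^+ n; set V := (Vq q n t)%:R.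
set X := s%:R * V => le_D.
have N_gt0 : 0 < N by rewrite exprn_gt0 ?ltr0n.
have Q_gt0 : 0 < Q by rewrite exprn_gt0 ?ltr0n.
have V_gt0 : 0 < V by rewrite ltr0n Vq_gt0.
have t3 : t%:R ^+ 3 <= (10 * u) ^+ 3 by rewrite lerXn2r ?nnegrE ?ler0n //; lra.
have le_uX : u ^+ 3 * X <= 16000 * N * D%:R * Q ^+ 3.
  rewrite -(@ler_pM2r _ (u ^+ 3)) ?exprn_gt0 //.
  rewrite (_ : _ * u ^+ 3 = (u ^+ 2) ^+ 3 * X); last by ring.
  apply: le_trans le_D _.
  rewrite (_ : 2 * N * D%:R * _ = 16 * N * D%:R * Q ^+ 3 * t%:R ^+ 3); last by ring.
  rewrite (_ : 16000 * N * D%:R * Q ^+ 3 * u ^+ 3 =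
               16 * N * D%:R * Q ^+ 3 * (10 * u) ^+ 3); last by ring.
  by rewrite ler_wpM2l // !mulr_ge0 ?exprn_ge0 ?ler0n // ltW.
rewrite (_ : (16000 * Q ^+ 3)^-1 * (u ^+ 2 * u) / (N / V) * s%:R =
            u ^+ 3 * X / (16000 * N * Q ^+ 3)); last first.
  by rewrite /X; field; rewrite -/V !gt_eqF.
rewrite ler_pdivrMr ?mulr_gt0 ?ltr0n //.
by rewrite (_ : D%:R * _ = 16000 * N * D%:R * Q ^+ 3); last ring.
Qed.

End RealBounds.

Unset Implicit Arguments. Set Strict Implicit.

Theorem lemma2p1 (R : realType) (q : nat) (hq : (2 <= q)%N) :
  exists (c : R) (n0 : nat), 0 < c /\
    forall (n t : nat), (n0 <= n)%N -> (0 < t)%N ->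
      (t%:R <= 10 * Num.sqrt (n%:R : R)) ->
      forall S : {set word q n},
        (n%:R ^+ 4 * Hq R q n t <= (#|S|)%:R) ->
        c * (n%:R * Num.sqrt (n%:R : R)) / Hq R q n t * (#|S|)%:R
          <= (maxdeg t S)%:R.
Proof.
exists (16000 * ((q ^ 2)%:R : R) ^+ 3)^-1, (4006 * q ^ 8)%N; split.
  by rewrite invr_gt0 mulr_gt0 ?exprn_gt0 ?ltr0n ?expn_gt0 //; lia.
move=> n t n_large _ le_t S S_large.
have q_gt0 : (0 < q)%N by lia.
have n_gt0 : (0 < n)%N by apply: leq_trans n_large; rewrite muln_gt0 expn_gt0 q_gt0.
have t_small := nat_sqr_leq_of_le_sqrt le_t.
apply: maxdeg_lower_real q_gt0 n_gt0 le_t _.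
exact: maxdeg_lower_nat hq n_large t_small (card_ge_Hq S_large).
Qed.
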